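(* Let $\{\mathcal{N}(\mathbf{t}),\ \mathbf{t}\in\mathbb{R}^d_+\}$ be a multiparameter Poisson process with transition parameter $\boldsymbol{\Lambda}=(\lambda_1,\dots,\lambda_d)$, $\lambda_i>0$. Then for $\mathbf{0}\prec\mathbf{r}\preceq\mathbf{s}\preceq\mathbf{t}$ and $m\ge1$, $$\mathbb{E}\{\mathcal{N}(\mathbf{r})\mathcal{N}(\mathbf{s})\mid\mathcal{N}(\mathbf{t})=m\}=\frac{m\,\boldsymbol{\Lambda}\cdot\mathbf{r}}{\boldsymbol{\Lambda}\cdot\mathbf{t}}+m(m-1)\frac{(\boldsymbol{\Lambda}\cdot\mathbf{r})(\boldsymbol{\Lambda}\cdot\mathbf{s})}{(\boldsymbol{\Lambda}\cdot\mathbf{t})^2}.$$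
   Context: On $\mathbb{R}^d_+$ use the componentwise partial order $\preceq$, with $\prec$ the strict relation; $\boldsymbol{\Lambda}\cdot\mathbf{t}=\sum_i\lambda_it_i$. A multiparameter Poisson process with transition parameter $\boldsymbol{\Lambda}$ is a nonnegative-integer-valued random field on $\mathbb{R}^d_+$ with $\mathcal{N}(\mathbf{0})=0$, nondecreasing in $\preceq$, with independent increments along chains $\mathbf{0}=\mathbf{t}^{(0)}\prec\dots\prec\mathbf{t}^{(m)}$, stationary increments ($\mathcal{N}(\mathbf{t})-\mathcal{N}(\mathbf{s})\overset{d}{=}\mathcal{N}(\mathbf{t}-\mathbf{s})$ for $\mathbf{s}\preceq\mathbf{t}$), and $\mathcal{N}(\mathbf{t})\sim$ Poisson$(\boldsymbol{\Lambda}\cdot\mathbf{t})$. *)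

From HB Require Import structures.
From mathcomp Require Import all_boot all_order all_algebra.
From mathcomp Require Import all_classical all_reals all_analysis.
Set Implicit Arguments. Unset Strict Implicit. Unset Printing Implicit Defensive.
Import Order.TTheory GRing.Theory Num.Theory.
Local Open Scope classical_set_scope.
Local Open Scope ring_scope.

Definition pt (R : realType) (d : nat) := 'I_d -> R.

Definition pzero (R : realType) (d : nat) : pt R d := fun _ => 0.
Definition psub (R : realType) (d : nat) (t s : pt R d) : pt R d :=
  fun i => t i - s i.
Definition nonneg_pt (R : realType) (d : nat) (t : pt R d) : Prop :=
  forall i, 0 <= t i.
Definition ple (R : realType) (d : nat) (s t : pt R d) : Prop :=
  forall i, s i <= t i.
Definition plt (R : realType) (d : nat) (s t : pt R d) : Prop :=
  ple s t /\ s <> t.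
Definition pdot (R : realType) (d : nat) (lam t : pt R d) : R :=
  \sum_(i < d) lam i * t i.

Section MPP.
Context (dsp : measure_display) (T : measurableType dsp) (R : realType)
  (P : probability T R).
Local Open Scope ereal_scope.

Definition indep_nat (m : nat) (X : 'I_m -> T -> nat) : Prop :=
  forall B : 'I_m -> set nat,
    P (\bigcap_(i in [set: 'I_m]) [set w | X i w \in B i]) =
    (\prod_(i < m) fine (P [set w | X i w \in B i]))%R%:E.

Definition multiparam_poisson (d : nat) (lam : pt R d)
    (N : pt R d -> T -> nat) : Prop :=
  (forall t k, nonneg_pt t -> measurable [set w | N t w = k]) /\
  (forall w, N (@pzero R d) w = 0%N) /\
  (forall s t, nonneg_pt s -> nonneg_pt t -> ple s t ->
     forall w, (N s w <= N t w)%N) /\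
  (forall (m : nat) (tt : nat -> pt R d),
     tt 0%N = @pzero R d ->
     (forall i, (i <= m)%N -> nonneg_pt (tt i)) ->
     (forall i, (i < m)%N -> plt (tt i) (tt i.+1)) ->
     indep_nat (fun (i : 'I_m) w => (N (tt i.+1) w - N (tt i) w)%N)) /\
  (forall s t, nonneg_pt s -> nonneg_pt t -> ple s t ->
     forall A : set nat,
       P [set w | (N t w - N s w)%N \in A] =
       P [set w | N (psub t s) w \in A]) /\
  (forall t, nonneg_pt t -> forall A : set nat,
     P [set w | N t w \in A] = poisson_prob (pdot lam t) 0%N A).

Definition cond_exp_event (X : T -> R) (A : set T) : \bar R :=
  (\int[P]_(w in A) (X w)%:E) * ((fine (P A))^-1)%R%:E.

End MPP.

From HB Require Import structures.
From mathcomp Require Import all_boot all_order all_algebra.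
From mathcomp Require Import all_classical all_reals all_analysis.
From mathcomp Require Import measurable_realfun ring zify.
Import Order.TTheory GRing.Theory Num.Theory.
Local Open Scope classical_set_scope.
Local Open Scope ring_scope.
Set Implicit Arguments. Unset Strict Implicit. Unset Printing Implicit Defensive.

(* Write a = Λ·r, b = Λ·(s - r) and c = Λ·(t - s).  Along the chain
   0 ≺ r ⪯ s ⪯ t the increments N(r), N(s) - N(r), N(t) - N(s) are independent
   Poisson variables with means a, b, c, hence for i <= j <= m
     P(N(r) = i, N(s) = j, N(t) = m)
       = e^-(a+b+c) a^i/i! b^(j-i)/(j-i)! c^(m-j)/(m-j)!.
   So E[N(r) N(s); N(t) = m] is a finite double sum, which collapses by the
   binomial theorem in the form  sum_i i a^i/i! b^(n-i)/(n-i)! = a (a+b)^(n-1)/(n-1)!,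
   used once in i and once in j; dividing by P(N(t) = m) = e^-(a+b+c) (a+b+c)^m/m!
   gives the formula. *)

Section exp_coeff_convolution.
Variable R : realType.
Implicit Types (a b c x : R) (n m : nat).

Let fact_natr_neq0 n : (n`!%:R : R) != 0.
Proof. by rewrite pnatr_eq0 -lt0n fact_gt0. Qed.

Lemma exp_coeffS x n : n.+1%:R * exp_coeff x n.+1 = x * exp_coeff x n.
Proof.
rewrite /exp_coeff /= factS natrM exprS.
by field; rewrite fact_natr_neq0 addrC natr1 pnatr_eq0.
Qed.

Lemma exp_coeff_gt0 x n : 0 < x -> 0 < exp_coeff x n.
Proof. by move=> x_gt0; rewrite /exp_coeff /= divr_gt0 ?exprn_gt0 ?ltr0n ?fact_gt0. Qed.

Lemma exp_coeff_conv a b n :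
  \sum_(i < n.+1) exp_coeff a i * exp_coeff b (n - i)%N = exp_coeff (a + b) n.
Proof.
rewrite /exp_coeff /= addrC exprDn mulr_suml.
apply: eq_bigr => -[i /=]; rewrite ltnS => lein _.
have /(congr1 (fun k => k%:R : R)) := bin_fact lein; rewrite !natrM => binE.
rewrite -binE -mulr_natr.
have bin_neq0 : ('C(n, i)%:R : R) != 0 by rewrite pnatr_eq0 -lt0n bin_gt0.
by field; rewrite !fact_natr_neq0 bin_neq0.
Qed.

Lemma exp_coeff_conv_moment a b n :
  \sum_(i < n.+2) i%:R * (exp_coeff a i * exp_coeff b (n.+1 - i)%N) =
  a * exp_coeff (a + b) n.
Proof.
rewrite big_ord_recl mul0r add0r -exp_coeff_conv mulr_sumr.
by apply: eq_bigr => i _; rewrite lift0 subSS mulrA exp_coeffS mulrA.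
Qed.

Lemma exp_coeff_conv_moment_scaled a b n :
  (a + b) * \sum_(i < n.+1) i%:R * (exp_coeff a i * exp_coeff b (n - i)%N) =
  n%:R * a * exp_coeff (a + b) n.
Proof.
case: n => [|n]; first by rewrite big_ord1 !mul0r mulr0.
by rewrite exp_coeff_conv_moment mulrAC exp_coeffS; ring.
Qed.

Lemma exp_coeff_conv_moment2 a b c m :
  (a + b + c) ^+ 2 * \sum_(j < m.+1) \sum_(i < j.+1)
      (i * j)%:R * (exp_coeff a i * exp_coeff b (j - i)%N * exp_coeff c (m - j)%N) =
  exp_coeff (a + b + c) m *
    (m%:R * a * (a + b + c) + (m * (m - 1))%:R * a * (a + b)).
Proof.
set T := a + b + c.
have innerE j : \sum_(i < j.+1)
    (i * j)%:R * (exp_coeff a i * exp_coeff b (j - i)%N * exp_coeff c (m - j)%N) =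
  j%:R * exp_coeff c (m - j)%N *
    \sum_(i < j.+1) i%:R * (exp_coeff a i * exp_coeff b (j - i)%N).
  by rewrite mulr_sumr; apply: eq_bigr => i _; rewrite natrM; ring.
under eq_bigr do rewrite innerE.
clear innerE; case: m => [|n]; first by rewrite big_ord1 /= !(mul0r, mulr0, add0r).
rewrite big_ord_recl /= !mul0r add0r.
have termE (j : 'I_n.+1) : (bump 0 j)%:R * exp_coeff c (n.+1 - bump 0 j)%N *
    \sum_(i < (bump 0 j).+1) i%:R * (exp_coeff a i * exp_coeff b (bump 0 j - i)%N) =
  a * (j%:R * (exp_coeff (a + b) j * exp_coeff c (n - j)%N) +
       exp_coeff (a + b) j * exp_coeff c (n - j)%N).
  by rewrite /bump /= add1n subSS exp_coeff_conv_moment -addn1 natrD; ring.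
under eq_bigr do rewrite termE.
rewrite -mulr_sumr big_split /= exp_coeff_conv.
have := exp_coeff_conv_moment_scaled (a + b) c n; rewrite -/T => momentE.
rewrite subSS subn0 mulnC natrM.
transitivity (a * T * (T * exp_coeff T n + (T *
  \sum_(i < n.+1) i%:R * (exp_coeff (a + b) i * exp_coeff c (n - i)%N)))).
  by ring.
rewrite momentE.
transitivity (n.+1%:R * exp_coeff T n.+1 * a * (T + n%:R * (a + b))); last by ring.
by rewrite exp_coeffS; ring.
Qed.
End exp_coeff_convolution.

Lemma bigcap_ord (T : Type) n (F : 'I_n -> set T) :
  \bigcap_(i in [set: 'I_n]) F i = \big[setI/setT]_(i < n) F i.
Proof.
apply/seteqP; split => [w Fw|w].
  by apply: (big_ind (fun A : set T => A w)) => // i _; apply: Fw.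
by move=> + i _; rewrite (bigD1 i) // => -[].
Qed.

Section integral_of_two_nat_variables.
Context (dsp : measure_display) (T : measurableType dsp) (R : realType)
  (mu : {measure set T -> \bar R}).
Local Open Scope ereal_scope.

Lemma ge0_integral_nat_pair (E : set T) (X Y : T -> nat) (f : nat -> nat -> R) m :
  measurable E ->
  (forall i, measurable [set w | X w = i]) ->
  (forall j, measurable [set w | Y w = j]) ->
  (forall i j, (0 <= f i j)%R) ->
  (forall w, E w -> (X w <= m)%N /\ (Y w <= m)%N) ->
  \int[mu]_(w in E) (f (X w) (Y w))%:E =
  \sum_(p : 'I_m.+1 * 'I_m.+1)
    (f p.1 p.2)%:E * mu (E `&` ([set w | X w = p.1] `&` [set w | Y w = p.2])).
Proof.
move=> mE mX mY f_ge0 XYm.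
pose A (p : 'I_m.+1 * 'I_m.+1) := [set w | X w = p.1] `&` [set w | Y w = p.2].
have mA p : measurable (A p) by apply: measurableI.
rewrite (eq_integral (fun w => \sum_(p : 'I_m.+1 * 'I_m.+1)
   (f p.1 p.2 * \1_(A p) w)%:E)); last first.
  move=> w /[!in_setE] /XYm[Xm Ym].
  rewrite sumEFin (bigD1 (inord (X w), inord (Y w))) //= big1 ?addr0.
    by rewrite indicE mem_set ?mulr1 ?inordK //; split; rewrite /= inordK.
  move=> [i j] /= ij_neq; rewrite indicE memNset ?mulr0 // => -[/= Xi Yj].
  by move: ij_neq; rewrite Xi Yj !inord_val eqxx.
rewrite ge0_integral_sum //; first last.
- by move=> p w _; rewrite lee_fin mulr_ge0 // indicE.
- by move=> p; apply/measurable_EFinP/measurable_funM => //; exact: measurable_indic.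
apply: eq_bigr => p _.
under eq_integral do rewrite EFinM.
rewrite ge0_integralZl ?lee_fin //; last first.
  by apply/measurable_EFinP; exact: measurable_indic.
by rewrite integral_indic // setIC.
Qed.
End integral_of_two_nat_variables.

(* Unlike [poisson_pmf], which is [1] at rate [0], this is the Dirac mass at [0]
   there, as is [poisson_prob 0]. *)
Definition poisson_mass (R : realType) (x : R) (n : nat) : R :=
  exp_coeff x n * expR (- x).

Lemma poisson_prob_set1 (R : realType) (x : R) n : 0 <= x ->
  poisson_prob x 0 [set n] = (poisson_mass x n)%:E.
Proof.
rewrite le_eqVlt => /predU1P[<-|x_gt0]; rewrite /poisson_prob.
  rewrite ltxx diracE /poisson_mass /exp_coeff /= oppr0 expR0 mulr1.
  case: n => [|n]; first by rewrite mem_set //= expr0 divr1.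
  by rewrite memNset //= expr0n mul0r.
by rewrite x_gt0 esum_set1 ?lee_fin ?poisson_pmf_ge0 // /poisson_pmf x_gt0.
Qed.

Lemma poisson_mass0 (R : realType) n : poisson_mass (0 : R) n = (n == 0)%:R.
Proof.
rewrite /poisson_mass /exp_coeff /= oppr0 expR0 mulr1 expr0n.
by case: n => [|n] /=; rewrite ?divr1 ?mul0r.
Qed.

Section points.
Variables (R : realType) (d : nat).
Implicit Types (lam r s t : pt R d).

Lemma ple_trans r s t : ple r s -> ple s t -> ple r t.
Proof. by move=> rs st i; apply: le_trans (rs i) (st i). Qed.

Lemma psub0 t : psub t (@pzero R d) = t.
Proof. by apply/funext => i; rewrite /psub /pzero subr0. Qed.

Lemma pdot_psub lam t s : pdot lam (psub t s) = pdot lam t - pdot lam s.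
Proof. by rewrite /pdot /psub -sumrB; apply: eq_bigr => i _; rewrite mulrBr. Qed.

Lemma pdot_le lam s t : (forall i, 0 <= lam i) -> ple s t ->
  pdot lam s <= pdot lam t.
Proof. by move=> lam_ge0 st; apply: ler_sum => i _; rewrite ler_wpM2l. Qed.

Lemma pdot_ge0 lam t : (forall i, 0 <= lam i) -> nonneg_pt t -> 0 <= pdot lam t.
Proof.
move=> lam_ge0 t_ge0; apply: le_trans (pdot_le lam_ge0 t_ge0).
by rewrite /pdot big1 // => i _; rewrite mulr0.
Qed.

Lemma pdot_gt0 lam r : (forall i, 0 < lam i) -> plt (@pzero R d) r ->
  0 < pdot lam r.
Proof.
move=> lam_gt0 [r_ge0 r_neq0].
have lam_ge0 i : 0 <= lam i by apply: ltW.
rewrite lt0r pdot_ge0 // andbT; apply/eqP => /psumr_eq0P r0; apply: r_neq0.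
apply/funext => i; apply/eqP.
have /eqP := r0 (fun j _ => mulr_ge0 (lam_ge0 j) (r_ge0 j)) i isT.
by rewrite mulf_eq0 gt_eqF //= eq_sym.
Qed.
End points.

Section multiparam_poisson_laws.
Context (dsp : measure_display) (T : measurableType dsp) (R : realType)
  (P : probability T R) (d : nat) (lam : pt R d) (N : pt R d -> T -> nat).
Hypothesis lam_ge0 : forall i, 0 <= lam i.
Hypothesis N_measurable :
  forall t k, nonneg_pt t -> measurable [set w | N t w = k].
Hypothesis N0 : forall w, N (@pzero R d) w = 0%N.
Hypothesis N_nondecreasing : forall s t, nonneg_pt s -> nonneg_pt t -> ple s t ->
  forall w, (N s w <= N t w)%N.
Hypothesis N_indep_increments : forall (m : nat) (tt : nat -> pt R d),
  tt 0%N = @pzero R d ->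
  (forall i, (i <= m)%N -> nonneg_pt (tt i)) ->
  (forall i, (i < m)%N -> plt (tt i) (tt i.+1)) ->
  indep_nat P (fun (i : 'I_m) w => (N (tt i.+1) w - N (tt i) w)%N).
Hypothesis N_stationary : forall s t, nonneg_pt s -> nonneg_pt t -> ple s t ->
  forall A : set nat,
    P [set w | (N t w - N s w)%N \in A] = P [set w | N (psub t s) w \in A].
Hypothesis N_poisson : forall t, nonneg_pt t -> forall A : set nat,
  P [set w | N t w \in A] = poisson_prob (pdot lam t) 0%N A.

Let set_in1 (X : T -> nat) k : [set w | X w \in [set k]] = [set w | X w = k].
Proof. by apply/seteqP; split => w /=; rewrite in_setE. Qed.

Lemma poisson_marginal t k : nonneg_pt t ->
  P [set w | N t w = k] = (poisson_mass (pdot lam t) k)%:E.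
Proof.
by move=> t_ge0; rewrite -set_in1 N_poisson // poisson_prob_set1 // pdot_ge0.
Qed.

Lemma poisson_increment s t k : nonneg_pt s -> ple s t ->
  P [set w | (N t w - N s w)%N = k] = (poisson_mass (pdot lam (psub t s)) k)%:E.
Proof.
move=> s_ge0 st; have t_ge0 : nonneg_pt t := ple_trans s_ge0 st.
rewrite -(set_in1 (fun w => N t w - N s w)%N) N_stationary // set_in1.
by rewrite poisson_marginal // => i; rewrite /psub subr_ge0.
Qed.

Lemma increments_joint_law n (tt : nat -> pt R d) (k : nat -> nat) :
  tt 0%N = @pzero R d -> (forall i, (i < n)%N -> plt (tt i) (tt i.+1)) ->
  P (\big[setI/setT]_(i < n) [set w | (N (tt i.+1) w - N (tt i) w)%N = k i]) =
  (\prod_(i < n) poisson_mass (pdot lam (psub (tt i.+1) (tt i))) (k i))%:E.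
Proof.
move=> tt0 tt_chain.
have tt_ge0 i : (i <= n)%N -> nonneg_pt (tt i).
  elim: i => [_|i IHi i_lt_n]; first by rewrite tt0.
  exact: ple_trans (IHi (ltnW i_lt_n)) (tt_chain i i_lt_n).1.
rewrite -bigcap_ord.
under eq_bigcapr do rewrite -set_in1.
rewrite (N_indep_increments tt0 tt_ge0 tt_chain (fun i => [set k i])); congr EFin.
apply: eq_bigr => i _; rewrite set_in1 poisson_increment //.
  exact/tt_ge0/ltnW.
exact: (tt_chain i (ltn_ord i)).1.
Qed.

Lemma increments_law2 u v i k : plt (@pzero R d) u -> plt u v ->
  P ([set w | N u w = i] `&` [set w | (N v w - N u w)%N = k]) =
  (poisson_mass (pdot lam u) i * poisson_mass (pdot lam (psub v u)) k)%:E.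
Proof.
move=> u_gt0 uv; pose tt := nth (@pzero R d) [:: @pzero R d; u; v].
have chain j : (j < 2)%N -> plt (tt j) (tt j.+1) by case: j => [|[|]].
have := @increments_joint_law 2 tt (nth 0%N [:: i; k]) erefl chain.
rewrite !big_ord_recl !big_ord0 /bump /tt /= setIT mulr1 psub0 => <-.
by congr (P _); apply/seteqP; split => w /=; rewrite N0 subn0.
Qed.

Lemma increments_law3 u v z i k l :
  plt (@pzero R d) u -> plt u v -> plt v z ->
  P ([set w | N u w = i] `&` [set w | (N v w - N u w)%N = k]
     `&` [set w | (N z w - N v w)%N = l]) =
  (poisson_mass (pdot lam u) i * poisson_mass (pdot lam (psub v u)) k
   * poisson_mass (pdot lam (psub z v)) l)%:E.
Proof.
move=> u_gt0 uv vz; pose tt := nth (@pzero R d) [:: @pzero R d; u; v; z].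
have chain j : (j < 3)%N -> plt (tt j) (tt j.+1) by case: j => [|[|[|]]].
have := @increments_joint_law 3 tt (nth 0%N [:: i; k; l]) erefl chain.
rewrite !big_ord_recl !big_ord0 /bump /tt /= setIT mulr1 psub0 mulrA setIA => <-.
by congr (P _); apply/seteqP; split => w /=; rewrite N0 subn0.
Qed.

Let increment_self u j :
  [set w | (N u w - N u w)%N = j] = if j == 0%N then setT else set0.
Proof. by case: j => [|j]; apply/seteqP; split => w //=; rewrite subnn. Qed.

Let poisson_mass_self u j : poisson_mass (pdot lam (psub u u)) j = (j == 0%N)%:R.
Proof. by rewrite pdot_psub subrr poisson_mass0. Qed.

(* Independence is only assumed along strict chains: when two of the points
   coincide, the increment between them vanishes and [poisson_mass 0] is the
   Dirac mass at [0]. *)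
Lemma increments_law r s t i k l : plt (@pzero R d) r -> ple r s -> ple s t ->
  P ([set w | N r w = i] `&` [set w | (N s w - N r w)%N = k]
     `&` [set w | (N t w - N s w)%N = l]) =
  (poisson_mass (pdot lam r) i * poisson_mass (pdot lam (psub s r)) k
   * poisson_mass (pdot lam (psub t s)) l)%:E.
Proof.
move=> r_gt0 rs st.
have [sr|sr] := pselect (s = r); have [ts|ts] := pselect (t = s).
- subst s t; rewrite !increment_self !poisson_mass_self.
  case: k => [|k]; case: l => [|l];
    rewrite ?setIT ?setI0 ?measure0 ?mulr0 ?mul0r ?mulr1 //.
  by rewrite poisson_marginal //; case: r_gt0.
- subst s; rewrite increment_self poisson_mass_self.
  case: k => [|k]; rewrite ?setIT ?setI0 ?set0I ?measure0 ?mulr1 ?mulr0 ?mul0r //.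
  by rewrite increments_law2 //; split => // /esym.
- subst t; rewrite increment_self poisson_mass_self.
  case: l => [|l]; rewrite ?setIT ?setI0 ?measure0 ?mulr1 ?mulr0 //.
  by rewrite increments_law2 //; split => // /esym.
- by rewrite increments_law3 //; split => // /esym.
Qed.

Section chain.
Variables r s t : pt R d.
Hypotheses (r_gt0 : plt (@pzero R d) r) (rs : ple r s) (st : ple s t).
Let r_ge0 : nonneg_pt r := r_gt0.1.
Let s_ge0 : nonneg_pt s := ple_trans r_ge0 rs.
Let t_ge0 : nonneg_pt t := ple_trans s_ge0 st.
Let Nrs := N_nondecreasing r_ge0 s_ge0 rs.
Let Nst := N_nondecreasing s_ge0 t_ge0 st.

Lemma joint_law m i j :
  P ([set w | N t w = m] `&` ([set w | N r w = i] `&` [set w | N s w = j])) =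
  (if (i <= j <= m)%N then
     poisson_mass (pdot lam r) i * poisson_mass (pdot lam (psub s r)) (j - i)
     * poisson_mass (pdot lam (psub t s)) (m - j)
   else 0)%:E.
Proof.
case: ifPn => ijm.
- rewrite -increments_law //; congr (P _); apply/seteqP; split => w /=.
  + by move=> [Ntm [Nri Nsj]]; split; first split; lia.
  + by move=> [[Nri Nsri] Ntsj]; have := Nrs w; have := Nst w; split; [|split]; lia.
- rewrite (_ : _ `&` _ = set0) ?measure0 //; apply/seteqP; split => w //=.
  by move=> [Ntm [Nri Nsj]]; have := Nrs w; have := Nst w; lia.
Qed.

Lemma integral_product_on_level_set m :
  let a := pdot lam r in let b := pdot lam (psub s r) in
  let c := pdot lam (psub t s) in
  (\int[P]_(w in [set w | N t w = m]) ((N r w * N s w)%N%:R)%:E =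
   (expR (- pdot lam t) * \sum_(j < m.+1) \sum_(i < j.+1)
     (i * j)%:R * (exp_coeff a i * exp_coeff b (j - i)%N * exp_coeff c (m - j)%N))%:E)%E.
Proof.
move=> a b c.
have Nrs_bound w : N t w = m -> (N r w <= m)%N /\ (N s w <= m)%N.
  by move=> <-; split; [apply: leq_trans (Nrs w) (Nst w) | apply: Nst].
rewrite (ge0_integral_nat_pair (f := fun i j => (i * j)%N%:R) P (N_measurable m t_ge0)
  (fun i => N_measurable i r_ge0) (fun j => N_measurable j s_ge0)
  (fun i j => ler0n _ _) Nrs_bound).
(* [P] is seen as a mere measure here; view it as a probability again. *)
under eq_bigr => p _ do rewrite -[X in (_ * X)%E]/(P _) joint_law // -EFinM.
rewrite sumEFin; congr EFin.
have expR_split : expR (- pdot lam t) = expR (- a) * expR (- b) * expR (- c).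
  by rewrite -!expRD /a /b /c !pdot_psub; congr expR; ring.
rewrite -(pair_bigA _ (fun i j : 'I_m.+1 => (i * j)%N%:R * (if (i <= j <= m)%N then
  poisson_mass a i * poisson_mass b (j - i) * poisson_mass c (m - j) else 0))) /=.
rewrite exchange_big mulr_sumr; apply: eq_bigr => j _.
rewrite (big_ord_widen m.+1 (fun i => (i * j)%:R *
  (exp_coeff a i * exp_coeff b (j - i)%N * exp_coeff c (m - j)%N))) ?ltn_ord //.
rewrite mulr_sumr [RHS]big_mkcond; apply: eq_bigr => i _.
rewrite (leq_ord j) andbT ltnS; case: (i <= j)%N; last by rewrite !mulr0.
by rewrite expR_split /poisson_mass; ring.
Qed.
End chain.
End multiparam_poisson_laws.

Theorem mainTheorem3 (dsp : measure_display) (T : measurableType dsp)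
  (R : realType) (P : probability T R) (d : nat) (lam : pt R d)
  (N : pt R d -> T -> nat) :
  (forall i, 0 < lam i) ->
  multiparam_poisson P lam N ->
  forall (r s t : pt R d) (m : nat),
    plt (@pzero R d) r -> ple r s -> ple s t -> (1 <= m)%N ->
    cond_exp_event P (fun w => ((N r w * N s w)%N)%:R) [set w | N t w = m] =
    (m%:R * pdot lam r / pdot lam t
     + (m * (m - 1))%N%:R * (pdot lam r * pdot lam s) / (pdot lam t) ^+ 2)%:E.
Proof.
move=> lam_gt0 [N_meas [N0 [N_mono [N_indep [N_stat N_pois]]]]] r s t m r_gt0 rs st _.
have lam_ge0 i : 0 <= lam i by apply: ltW.
have t_ge0 : nonneg_pt t := ple_trans (ple_trans r_gt0.1 rs) st.
rewrite /cond_exp_event (integral_product_on_level_set lam_ge0 N_meas N0 N_mono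
  N_indep N_stat N_pois) //.
rewrite (poisson_marginal lam_ge0 N_pois) //= -EFinM; congr EFin.
have T_gt0 : 0 < pdot lam t.
  exact: lt_le_trans (pdot_gt0 lam_gt0 r_gt0) (pdot_le lam_ge0 (ple_trans rs st)).
have sE : pdot lam r + pdot lam (psub s r) = pdot lam s by rewrite pdot_psub; ring.
have tE : pdot lam s + pdot lam (psub t s) = pdot lam t by rewrite pdot_psub; ring.
have := exp_coeff_conv_moment2 (pdot lam r) (pdot lam (psub s r))
  (pdot lam (psub t s)) m.
rewrite sE tE; set S := \sum_(j < m.+1) _ => moment.
have T2_neq0 : pdot lam t ^+ 2 != 0 by rewrite expf_neq0 // gt_eqF.
rewrite -[S](mulKf T2_neq0) moment /poisson_mass.
by field; rewrite !gt_eqF ?expR_gt0 ?exp_coeff_gt0.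
Qed.
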